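(* Let $(f,\bar f):(C,\sup_C)\to(D,\sup_D)$ be a $P$-algebra morphism. Then the canonical function $\pi_f:\mathsf{isalgequiv}(f,\bar f)\to\mathsf{isequiv}(f)$ is an equivalence of types. Here $\pi_f$ sends $((g,\bar g),p,(h,\bar h),q)$ to the element of $\mathsf{isequiv}(f)$ obtained from the functions $g,h:D\to C$ and the paths $\mathsf{Id}(g\circ f,1_C)$, $\mathsf{Id}(f\circ h,1_D)$ given by the first components of $p$ and $q$ (under the characterization of paths in $\Sigma$-types), via the standard equivalence $\mathsf{isequiv}(f)\simeq(\Sigma g:D\to C)\mathsf{Id}(g\circ f,1_C)\times(\Sigma h:D\to C)\mathsf{Id}(f\circ h,1_D)$. In particular, a $P$-algebra morphism is a $P$-algebra equivalence if and only if its underlying function is an equivalence.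
   Context: We work in the intensional Martin-Löf type theory $\mathcal H$ ($\Sigma$, $\Pi$, identity types, a universe $\mathsf U$ à la Russell closed under these, judgemental $\eta$ for $\Pi$, function extensionality; no identity reflection, K or UIP). $\mathsf{iscontr}(X)=(\Sigma x:X)(\Pi y:X)\mathsf{Id}_X(x,y)$; $\mathsf{isequiv}(f)=(\Pi y:D)\mathsf{iscontr}((\Sigma x:C)\mathsf{Id}(fx,y))$. Fix $A:\mathsf U$, $B:A\to\mathsf U$. For $C:\mathsf U$, $PC=(\Sigma x:A)(B(x)\to C)$, and for $f:C\to D$, $Pf(x,u)=(x,f\circ u)$. A $P$-algebra is $(C,\sup_C)$ with $C:\mathsf U$, $\sup_C:PC\to C$. A $P$-algebra morphism $(C,\sup_C)\to(D,\sup_D)$ is $(f,\bar f)$ with $f:C\to D$, $\bar f:\mathsf{Id}_{PC\to D}(f\circ\sup_C,\sup_D\circ Pf)$; $\mathsf{Alg}(C,D)$ is their type. The composite of $(f,\bar f):C\to D$ and $(g,\bar g):D\to E$ has underlying function $g\circ f$ and path obtained by composing $g\circ\bar f$ (action of $g$ on $\bar f$), $\bar g\circ Pf$ and $\sup_E$ applied to the canonical path $\mathsf{Id}(Pg\circ Pf,P(g\circ f))$; the identity on $C$ is $1_C$ with the path induced by the canonical path $\mathsf{Id}(P(1_C),1_{PC})$. $\mathsf{isalgequiv}(f,\bar f)=(\Sigma g:\mathsf{Alg}(D,C))\mathsf{Id}_{\mathsf{Alg}(C,C)}(g\circ (f,\bar f),1_C)\times(\Sigma h:\mathsf{Alg}(D,C))\mathsf{Id}_{\mathsf{Alg}(D,D)}((f,\bar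 f)\circ h,1_D)$. *)

(* Identity types are an inductive family in Type
   ([Id]), NOT Rocq's Prop-valued [eq]; no K/UIP is assumed.  Function
   extensionality is not an axiom here: it is taken as an explicit hypothesis
   of the main theorem. *)
Set Universe Polymorphism.

Inductive Id {X : Type} (x : X) : X -> Type := refl : Id x x.
Arguments refl {X} x.

Definition concat {X : Type} {x y z : X} (p : Id x y) (q : Id y z) : Id x z :=
  match q in Id _ z return Id x z with refl _ => p end.
Definition inv {X : Type} {x y : X} (p : Id x y) : Id y x :=
  match p in Id _ y return Id y x with refl _ => refl x end.
Definition ap {X Y : Type} (f : X -> Y) {x y : X} (p : Id x y) : Id (f x) (f y) :=
  match p in Id _ y return Id (f x) (f y) with refl _ => refl (f x) end.
Definition transport {X : Type} (Q : X -> Type) {x y : X} (p : Id x y) (u : Q x) : Q y :=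
  match p in Id _ y return Q y with refl _ => u end.
Definition happly {X : Type} {Y : X -> Type} {u v : forall x, Y x} (p : Id u v)
  : forall x, Id (u x) (v x) :=
  fun x => match p in Id _ v return Id (u x) (v x) with refl _ => refl (u x) end.

#[projections(primitive)]
Record Sig (X : Type) (Y : X -> Type) : Type := pair { pr1 : X ; pr2 : Y pr1 }.
Arguments Sig : clear implicits.
Arguments pair {X Y} pr1 pr2.
Arguments pr1 {X Y} s.
Arguments pr2 {X Y} s.
Definition Prod (X Y : Type) : Type := Sig X (fun _ => Y).

Definition iscontr (X : Type) : Type := Sig X (fun x => forall y : X, Id x y).
Definition fib {X Y : Type} (f : X -> Y) (y : Y) : Type := Sig X (fun x => Id (f x) y).
Definition isequiv {X Y : Type} (f : X -> Y) : Type := forall y : Y, iscontr (fib f y).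

Definition funext_statement : Type :=
  forall (X : Type) (Y : X -> Type) (u v : forall x, Y x), isequiv (@happly X Y u v).

Definition biinv {X Y : Type} (f : X -> Y) : Type :=
  Prod (Sig (Y -> X) (fun g => Id (fun x => g (f x)) (fun x => x)))
       (Sig (Y -> X) (fun h => Id (fun y => f (h y)) (fun y => y))).

Definition concat_1p {X} {x y : X} (p : Id x y) : Id (concat (refl x) p) p :=
  match p with refl _ => refl _ end.
Definition concat_Vp {X} {x y : X} (p : Id x y) : Id (concat (inv p) p) (refl y) :=
  match p with refl _ => refl _ end.
Definition concat_assoc {X} {x y z w : X} (p : Id x y) (q : Id y z) (r : Id z w)
  : Id (concat p (concat q r)) (concat (concat p q) r) :=
  match r with refl _ => refl _ end.
Definition ap_concat {X Y} (f : X -> Y) {x y z : X} (p : Id x y) (q : Id y z)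
  : Id (ap f (concat p q)) (concat (ap f p) (ap f q)) :=
  match q with refl _ => refl _ end.
Definition ap_compose {X Y Z} (f : X -> Y) (g : Y -> Z) {x y : X} (p : Id x y)
  : Id (ap (fun a => g (f a)) p) (ap g (ap f p)) :=
  match p with refl _ => refl _ end.
Definition ap_id {X} {x y : X} (p : Id x y) : Id (ap (fun a => a) p) p :=
  match p with refl _ => refl _ end.
Definition ap2 {X Y} (f : X -> Y) {x y : X} {p q : Id x y} (r : Id p q)
  : Id (ap f p) (ap f q) := ap (ap f) r.
Definition whiskerL {X} {x y z : X} (p : Id x y) {q r : Id y z} (s : Id q r)
  : Id (concat p q) (concat p r) := ap (concat p) s.
Definition whiskerR {X} {x y z : X} {p q : Id x y} (s : Id p q) (r : Id y z)
  : Id (concat p r) (concat q r) := ap (fun t => concat t r) s.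

Definition natural {X Y} {u v : X -> Y} (H : forall x, Id (u x) (v x)) {x y : X} (p : Id x y)
  : Id (concat (H x) (ap v p)) (concat (ap u p) (H y)) :=
  match p with refl _ => inv (concat_1p (H x)) end.

Definition cancelR {X} {x y z : X} {p q : Id x y} {r : Id y z}
  (s : Id (concat p r) (concat q r)) : Id p q.
Proof. destruct r. exact s. Defined.

Definition cancelL {X} {x y z : X} {p : Id x y} {q r : Id y z}
  (s : Id (concat p q) (concat p r)) : Id q r.
Proof.
  destruct p.
  exact (concat (inv (concat_1p q)) (concat s (concat_1p r))).
Defined.

Definition homot_id_comm {X} (u : X -> X) (H : forall x, Id (u x) x) (x : X)
  : Id (H (u x)) (ap u (H x)).
Proof.
  exact (cancelR (concat (whiskerL (H (u x)) (inv (ap_id (H x)))) (natural H (H x)))).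
Defined.

Definition path_sig {X} {Y : X -> Type} (u v : Sig X Y) (p : Id (pr1 u) (pr1 v))
  (q : Id (transport Y p (pr2 u)) (pr2 v)) : Id u v.
Proof.
  destruct u as [u1 u2], v as [v1 v2]; simpl in *.
  destruct p; simpl in q; destruct q; exact (refl _).
Defined.

Definition transport_fib {X Y} (f : X -> Y) (b : Y) {x x' : X} (p : Id x x') (u : Id (f x) b)
  : Id (transport (fun z => Id (f z) b) p u) (concat (inv (ap f p)) u).
Proof. destruct p; simpl. exact (inv (concat_1p u)). Defined.

Section QinvToEquiv.
Context {X Y : Type} (f : X -> Y) (g : Y -> X)
        (eta : forall x, Id (g (f x)) x) (eps : forall y, Id (f (g y)) y).

(* adjusted counit *)
Definition eps' (y : Y) : Id (f (g y)) y :=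
  concat (inv (eps (f (g y)))) (concat (ap f (eta (g y))) (eps y)).

Definition half_adj (x : X) : Id (ap f (eta x)) (eps' (f x)).
Proof.
  unfold eps'.
  assert (h1 : Id (ap f (eta (g (f x)))) (ap (fun a => f (g a)) (ap f (eta x)))).
  { refine (concat (ap2 f (homot_id_comm (fun a => g (f a)) eta x)) _).
    refine (concat (inv (ap_compose (fun a => g (f a)) f (eta x))) _).
    exact (ap_compose f (fun a => f (g a)) (eta x)). }
  assert (h2 := natural eps (ap f (eta x))). simpl in h2.
  apply inv.
  refine (concat (whiskerL _ (whiskerR h1 _)) _).
  refine (concat (whiskerL _ (inv h2)) _).
  refine (concat (whiskerL _ (whiskerL _ (ap_id _))) _).
  refine (concat (concat_assoc _ _ _) _).
  refine (concat (whiskerR (concat_Vp _) _) _).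
  exact (concat_1p _).
Defined.

Definition qinv_isequiv : isequiv f.
Proof.
  intro y. refine (pair (pair (g y) (eps' y)) _).
  intros [x p]. simpl in p. destruct p.
  refine (path_sig (pair (g (f x)) (eps' (f x))) (pair x (refl (f x))) (eta x) _).
  simpl.
  refine (concat (transport_fib f (f x) (eta x) (eps' (f x))) _).
  refine (concat (whiskerL _ (inv (half_adj x))) _).
  exact (concat_Vp _).
Defined.
End QinvToEquiv.

Definition biinv_isequiv {X Y : Type} (f : X -> Y) (b : biinv f) : isequiv f :=
  let g := pr1 (pr1 b) in
  let h := pr1 (pr2 b) in
  let eta := happly (pr2 (pr1 b)) in
  let eps := happly (pr2 (pr2 b)) in
  qinv_isequiv f h
    (fun x => concat (inv (eta (h (f x)))) (concat (ap g (eps (f x))) (eta x)))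
    eps.

Section Alg.
Context (A : Type) (B : A -> Type).

Definition Pobj (C : Type) : Type := Sig A (fun x => B x -> C).
Definition Pmap {C D : Type} (f : C -> D) : Pobj C -> Pobj D :=
  fun w => pair (pr1 w) (fun b => f (pr2 w b)).

Definition AlgHom {C : Type} (supC : Pobj C -> C) {D : Type} (supD : Pobj D -> D) : Type :=
  Sig (C -> D) (fun f => Id (fun w => f (supC w)) (fun w => supD (Pmap f w))).

Definition Pcomp_path {C D E : Type} (f : C -> D) (g : D -> E)
  : Id (fun w => Pmap g (Pmap f w)) (fun w => Pmap (fun c => g (f c)) w) := refl _.
Definition Pid_path (C : Type) : Id (fun w => Pmap (fun c : C => c) w) (fun w => w) := refl _.

Definition algcomp {C D E : Type} {supC : Pobj C -> C} {supD : Pobj D -> D} {supE : Pobj E -> E}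
  (F : AlgHom supC supD) (G : AlgHom supD supE) : AlgHom supC supE :=
  pair (fun c => pr1 G (pr1 F c))
    (concat
      (concat (ap (fun k => fun w => pr1 G (k w)) (pr2 F))
              (ap (fun k => fun w => k (Pmap (pr1 F) w)) (pr2 G)))
      (ap (fun k => fun w => supE (k w)) (Pcomp_path (pr1 F) (pr1 G)))).

Definition algid {C : Type} (supC : Pobj C -> C) : AlgHom supC supC :=
  pair (fun c => c) (ap (fun k => fun w => supC (k w)) (inv (Pid_path C))).

Definition isalgequiv {C D : Type} {supC : Pobj C -> C} {supD : Pobj D -> D}
  (F : AlgHom supC supD) : Type :=
  Prod (Sig (AlgHom supD supC) (fun G => Id (algcomp F G) (algid supC)))
       (Sig (AlgHom supD supC) (fun H => Id (algcomp H F) (algid supD))).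

Definition pi_alg {C D : Type} {supC : Pobj C -> C} {supD : Pobj D -> D}
  (F : AlgHom supC supD) (e : isalgequiv F) : isequiv (pr1 F) :=
  biinv_isequiv (pr1 F)
    (pair (pair (pr1 (pr1 (pr1 e))) (ap pr1 (pr2 (pr1 e))))
          (pair (pr1 (pr1 (pr2 e))) (ap pr1 (pr2 (pr2 e))))).
End Alg.

(* Both isalgequiv(f, fbar) and isequiv(f) are propositions once f is an
   equivalence: isequiv(f) always is, and isalgequiv(f, fbar) is then even
   contractible.  Indeed its two factors are the fibres over the identity
   algebra morphism of precomposition and postcomposition with (f, fbar) on
   algebra morphisms, and these are equivalences: on underlying functions
   they are pre/postcomposition with the equivalence f, and on the
   homomorphism paths they are [ap] of precomposition with the equivalence
   P f, followed by concatenation with a fixed path.  A map into a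
   proposition from a type that is contractible as soon as the target is
   inhabited has contractible fibres. *)
Set Universe Polymorphism.

Definition qinv {X Y : Type} (f : X -> Y) : Type :=
  Sig (Y -> X) (fun g => Prod (forall x, Id (g (f x)) x) (forall y, Id (f (g y)) y)).

Definition mkqinv {X Y} {f : X -> Y} (g : Y -> X) (gf : forall x, Id (g (f x)) x)
  (fg : forall y, Id (f (g y)) y) : qinv f := pair g (pair gf fg).

Definition isequiv_of_qinv {X Y} {f : X -> Y} (q : qinv f) : isequiv f :=
  qinv_isequiv f (pr1 q) (pr1 (pr2 q)) (pr2 (pr2 q)).

Definition qinv_of_isequiv {X Y} {f : X -> Y} (e : isequiv f) : qinv f :=
  mkqinv (fun y => pr1 (pr1 (e y)))
    (fun x => ap pr1 (pr2 (e (f x)) (pair x (refl (f x)))))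
    (fun y => pr2 (pr1 (e y))).

Definition qinv_compose {X Y Z} {f : X -> Y} {g : Y -> Z} (qf : qinv f) (qg : qinv g)
  : qinv (fun x => g (f x)) :=
  mkqinv (fun z => pr1 qf (pr1 qg z))
    (fun x => concat (ap (pr1 qf) (pr1 (pr2 qg) (f x))) (pr1 (pr2 qf) x))
    (fun z => concat (ap g (pr2 (pr2 qf) (pr1 qg z))) (pr2 (pr2 qg) z)).

Lemma qinv_transport {X} (T : X -> Type) {a b : X} (p : Id a b) : qinv (transport T p).
Proof. destruct p. exact (mkqinv (fun y => y) (fun x => refl x) (fun y => refl y)). Qed.

Lemma qinv_concat_l {X} {x y z : X} (a : Id x y) : qinv (fun t : Id y z => concat a t).
Proof.
  refine (mkqinv (fun t => concat (inv a) t) _ _); intro t; destruct t, a; exact (refl _).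
Qed.

Lemma qinv_concat_r {X} {x y z : X} (b : Id y z) : qinv (fun t : Id x y => concat t b).
Proof.
  refine (mkqinv (fun t => concat t (inv b)) _ _); intro t; destruct b; exact (refl _).
Qed.

Section ApQinv.
Context {X Y : Type} (h : X -> Y) (k : Y -> X) (kh : forall x, Id (k (h x)) x).

Definition ap_inverse {x x' : X} (q : Id (h x) (h x')) : Id x x' :=
  concat (inv (kh x)) (concat (ap k q) (kh x')).

Lemma ap_inverse_ap {x x' : X} (p : Id x x') : Id (ap_inverse (ap h p)) p.
Proof.
  destruct p; unfold ap_inverse; simpl.
  exact (concat (whiskerL _ (concat_1p _)) (concat_Vp _)).
Qed.

Lemma ap_ap_conjugate {x x' : X} (s : Id x x')
  : Id (ap k (ap h s)) (concat (kh x) (concat s (inv (kh x')))).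
Proof.
  destruct s; simpl. generalize (kh x); generalize (k (h x)).
  intros y p; destruct p. exact (refl _).
Qed.
End ApQinv.

Lemma concat_conjugate_cancel {Z} {a b c d : Z} (p : Id a b) (t : Id a c) (p' : Id c d)
  : Id (concat p (concat (concat (inv p) (concat t p')) (inv p'))) t.
Proof. destruct p', t, p. exact (refl _). Qed.

(* [ap h] is a section of [ap_inverse]; it is also a retraction because
   [ap k] has the left inverse [ap_inverse k h] and sends both
   [ap h (ap_inverse r)] and [r] to [ap k r]. *)
Lemma qinv_ap {X Y : Type} {h : X -> Y} (q : qinv h) (x x' : X)
  : qinv (fun p : Id x x' => ap h p).
Proof.
  destruct q as [k [kh hk]].
  refine (mkqinv (ap_inverse h k kh) (ap_inverse_ap h k kh) _).
  intro r.
  assert (ap_k_eq : Id (ap k (ap h (ap_inverse h k kh r))) (ap k r)).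
  { exact (concat (ap_ap_conjugate h k kh _) (concat_conjugate_cancel _ _ _)). }
  refine (concat (inv (ap_inverse_ap k h hk (ap h (ap_inverse h k kh r)))) _).
  exact (concat (ap (ap_inverse k h hk) ap_k_eq) (ap_inverse_ap k h hk r)).
Qed.

Definition contr_retract {X Y} (r : Y -> X) (s : X -> Y) (rs : forall x, Id (r (s x)) x)
  (c : iscontr Y) : iscontr X :=
  pair (r (pr1 c)) (fun x => concat (ap r (pr2 c (s x))) (rs x)).

Definition path_contr {X} (c : iscontr X) (x y : X) : Id x y :=
  concat (inv (pr2 c x)) (pr2 c y).

Definition contr_sig {X} {Y : X -> Type} (cX : iscontr X) (cY : forall x, iscontr (Y x))
  : iscontr (Sig X Y) :=
  pair (pair (pr1 cX) (pr1 (cY (pr1 cX))))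
    (fun z => path_sig (Y := Y) (pair _ _) z (pr2 cX (pr1 z)) (path_contr (cY (pr1 z)) _ _)).

Lemma contr_paths_of_allpaths {X} (h : forall x y : X, Id x y) (x y : X)
  : iscontr (Id x y).
Proof.
  refine (pair (concat (inv (h x x)) (h x y)) _).
  intro q; destruct q. exact (concat_Vp _).
Qed.

Definition pr2_path {K} {T : K -> Type} {u v : Sig K T} (r : Id u v)
  : Id (transport T (ap pr1 r) (pr2 u)) (pr2 v) :=
  match r in Id _ v return Id (transport T (ap pr1 r) (pr2 u)) (pr2 v) with
  | refl _ => refl _ end.

Lemma path_sig_eta {K} {T : K -> Type} {u v : Sig K T} (r : Id u v)
  : Id (path_sig u v (ap pr1 r) (pr2_path r)) r.
Proof. destruct r. exact (refl _). Qed.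

Definition functor_sig {U K : Type} {V : U -> Type} {T : K -> Type} (phi : U -> K)
  (psi : forall u, V u -> T (phi u)) (x : Sig U V) : Sig K T :=
  pair (phi (pr1 x)) (psi (pr1 x) (pr2 x)).

(* The fibre over [v] is a retract of the type of pairs of a point in the
   fibre of [phi] over [pr1 v] and a point in the fibre over [pr2 v] of
   [psi] followed by transport along the corresponding path. *)
Lemma isequiv_functor_sig {U K : Type} {V : U -> Type} {T : K -> Type} (phi : U -> K)
  (psi : forall u, V u -> T (phi u))
  (e_phi : isequiv phi) (e_psi : forall u, isequiv (psi u))
  : isequiv (functor_sig phi psi).
Proof.
  intro v.
  pose (fib_pairs := Sig (fib phi (pr1 v))
          (fun up => fib (fun y => transport T (pr2 up) (psi (pr1 up) y)) (pr2 v))).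
  assert (contr_fib_pairs : iscontr fib_pairs).
  { apply (contr_sig (e_phi (pr1 v))); intros [u p].
    exact (isequiv_of_qinv (qinv_compose (qinv_of_isequiv (e_psi u)) (qinv_transport T p))
             (pr2 v)). }
  refine (contr_retract
    (fun y : fib_pairs => pair (pair (pr1 (pr1 y)) (pr1 (pr2 y)))
       (path_sig (pair _ _) v (pr2 (pr1 y)) (pr2 (pr2 y))))
    (fun z : fib (functor_sig phi psi) v =>
       pair (pair (pr1 (pr1 z)) (ap pr1 (pr2 z))) (pair (pr2 (pr1 z)) (pr2_path (pr2 z))))
    _ contr_fib_pairs).
  intro z. exact (ap (pair (pr1 z)) (path_sig_eta (pr2 z))).
Qed.

Section Funext.
Variable funext : funext_statement.

Definition path_forall {X : Type} {Y : X -> Type} {u v : forall x, Y x}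
  (h : forall x, Id (u x) (v x)) : Id u v := pr1 (pr1 (funext X Y u v h)).

Lemma path_iscontr {X} (c1 c2 : iscontr X) : Id c1 c2.
Proof.
  refine (path_sig c1 c2 (pr2 c1 (pr1 c2)) (path_forall _)).
  intro y. exact (path_contr (contr_paths_of_allpaths (path_contr c1) (pr1 c2) y) _ _).
Qed.

Lemma path_isequiv {X Y} {f : X -> Y} (e1 e2 : isequiv f) : Id e1 e2.
Proof. exact (path_forall (fun y => path_iscontr (e1 y) (e2 y))). Qed.

Definition qinv_precompose {X Y Z : Type} {f : X -> Y} (q : qinv f)
  : qinv (fun (g : Y -> Z) (x : X) => g (f x)) :=
  mkqinv (fun k y => k (pr1 q y))
    (fun g => path_forall (fun y => ap g (pr2 (pr2 q) y)))
    (fun k => path_forall (fun x => ap k (pr1 (pr2 q) x))).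

Definition qinv_postcompose {X Y Z : Type} {f : X -> Y} (q : qinv f)
  : qinv (fun (g : Z -> X) (z : Z) => f (g z)) :=
  mkqinv (fun k z => pr1 q (k z))
    (fun g => path_forall (fun z => pr1 (pr2 q) (g z)))
    (fun k => path_forall (fun z => pr2 (pr2 q) (k z))).

Variables (A : Type) (B : A -> Type).

Definition qinv_Pmap {X Y : Type} {f : X -> Y} (q : qinv f) : qinv (Pmap A B f) :=
  mkqinv (f := Pmap A B f) (Pmap A B (pr1 q))
    (fun w => ap (pair (Y := fun a => B a -> X) (pr1 w))
       (path_forall (u := fun b => pr1 q (f (pr2 w b))) (v := pr2 w)
          (fun b => pr1 (pr2 q) (pr2 w b))))
    (fun w => ap (pair (Y := fun a => B a -> Y) (pr1 w))
       (path_forall (u := fun b => f (pr1 q (pr2 w b))) (v := pr2 w)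
          (fun b => pr2 (pr2 q) (pr2 w b)))).

Variables (C : Type) (supC : Pobj A B C -> C) (D : Type) (supD : Pobj A B D -> D)
  (F : AlgHom A B supC supD).
Hypothesis e : isequiv (pr1 F).

Lemma isequiv_algcomp_l {E : Type} (supE : Pobj A B E -> E)
  : isequiv (fun G : AlgHom A B supD supE => algcomp A B F G).
Proof.
  apply (isequiv_functor_sig (fun g c => g (pr1 F c))
           (fun g gb => concat (ap (fun k w => g (k w)) (pr2 F))
                               (ap (fun k w => k (Pmap A B (pr1 F) w)) gb))).
  - exact (isequiv_of_qinv (qinv_precompose (qinv_of_isequiv e))).
  - intro g. apply isequiv_of_qinv. refine (qinv_compose _ (qinv_concat_l _)).
    exact (qinv_ap (qinv_precompose (qinv_Pmap (qinv_of_isequiv e))) _ _).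
Qed.

Lemma isequiv_algcomp_r {E : Type} (supE : Pobj A B E -> E)
  : isequiv (fun H : AlgHom A B supE supC => algcomp A B H F).
Proof.
  apply (isequiv_functor_sig (fun h x => pr1 F (h x))
           (fun h hb => concat (ap (fun k w => pr1 F (k w)) hb)
                               (ap (fun k w => k (Pmap A B h w)) (pr2 F)))).
  - exact (isequiv_of_qinv (qinv_postcompose (qinv_of_isequiv e))).
  - intro h. apply isequiv_of_qinv. refine (qinv_compose _ (qinv_concat_r _)).
    exact (qinv_ap (qinv_postcompose (qinv_of_isequiv e)) _ _).
Qed.

Lemma contr_isalgequiv : iscontr (isalgequiv A B F).
Proof.
  apply contr_sig.
  - exact (isequiv_algcomp_l supC (algid A B supC)).
  - intros _. exact (isequiv_algcomp_r supD (algid A B supD)).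
Qed.
End Funext.

Theorem mainTheorem6 (funext : funext_statement)
  (A : Type) (B : A -> Type)
  (C : Type) (supC : Pobj A B C -> C) (D : Type) (supD : Pobj A B D -> D)
  (F : AlgHom A B supC supD) :
  isequiv (pi_alg A B F).
Proof.
  intro e.
  apply contr_sig.
  - exact (contr_isalgequiv funext A B C supC D supD F e).
  - intro x. exact (contr_paths_of_allpaths (path_isequiv funext) _ _).
Qed.
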